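(* Let $X$ be a Banach space and $M,N:\Sigma\to cb(X)$ two consistent $d_H$-multimeasures. If there is a non-negative bounded measurable function $\theta:\Omega\to\mathbb R$ such that $j\circ M(E)=(BDS)\int_E\theta\,d(j\circ N)$ for every $E\in\Sigma$, then $\theta$ is $BDS_m$-integrable with respect to $N$ and $M(E)=\int_E\theta\,dN$ for every $E\in\Sigma$.
   Context: $(\Omega,\Sigma)$ is a measurable space, $X$ a Banach space with dual unit ball $B_{X'}$. $cb(X)$: nonempty closed bounded convex subsets of $X$ with Hausdorff metric $d_H$; $s(x',C)=\sup\{\langle x',x\rangle:x\in C\}$. A $d_H$-multimeasure is $M:\Sigma\to cb(X)$ countably additive in $d_H$. $-N$: $E\mapsto\{-x:x\in N(E)\}$. $\mathcal N(M)=\{E:M(E)=\{0\}\}$; $M,N$ are consistent if there is $H\in\Sigma$ such that both are pointless on $H$ (no $E\subseteq H$, $E\in\Sigma\setminus\mathcal N$, on which the restriction is of the form $F\mapsto\{\kappa(F)\}$ with $\kappa$ a countably additive vector measure) and both are of that vector form on $\Omega\setminus H$. Rådström embedding: $j(A)=s(\cdot,A)|_{B_{X'}}\in\ell_\infty(B_{X'})$. For a vector measure $n:\Sigma\to Y$, $(BDS)\int_Ef\,dn$ is the element $\nu(E)\in Y$ with $\langle y',\nu(E)\rangle=\int_Ef\,d\langle y',n\rangle$ for all $y'\in Y'$. $BDS_m$-integral: measurable $f$ is $BDS_m$-integrable w.r.t. $N$ if for all $E,x'$ the expression $\int_Ef^+ds(x',N)+\int_Ef^-ds(x',-N)$ makes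 sense and for each $E$ there is a nonempty closed convex $M_f(E)$ with $s(x',M_f(E))$ equal to it for all $x'\in X'$; $\int_Ef\,dN:=M_f(E)$. *)

From HB Require Import structures.
From mathcomp Require Import all_boot all_order all_algebra.
From mathcomp Require Import all_classical all_reals all_analysis.
Set Implicit Arguments. Unset Strict Implicit. Unset Printing Implicit Defensive.
Import Order.TTheory GRing.Theory Num.Theory.
Import numFieldNormedType.Exports.
Local Open Scope classical_set_scope.
Local Open Scope ring_scope.

Section Defs.
Context {R : realType}.

Section Banach.
Variable X : normedModType R.

Definition is_dual (x' : X -> R) : Prop :=
  (forall (a : R) (u v : X), x' (a *: u + v) = a * x' u + x' v) /\ continuous x'.

Definition dual_ball : set (X -> R) :=
  [set x' | (forall (a : R) (u v : X), x' (a *: u + v) = a * x' u + x' v) /\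
            (forall u, `|x' u| <= `|u|)].

Definition convex_set_ (C : set X) : Prop :=
  forall x y (t : R), C x -> C y -> 0 <= t <= 1 -> C (t *: x + (1 - t) *: y).

Definition cbX (C : set X) : Prop :=
  C !=set0 /\ closed C /\ bounded_set C /\ convex_set_ C.

Definition supp (x' : X -> R) (C : set X) : \bar R :=
  ereal_sup [set (x' x)%:E | x in C].

Definition dist_pt (x : X) (B : set X) : \bar R :=
  ereal_inf [set (`|x - b|)%:E | b in B].
Definition dH (A B : set X) : \bar R :=
  maxe (ereal_sup [set dist_pt a B | a in A]) (ereal_sup [set dist_pt b A | b in B]).

Definition msum (A B : set X) : set X := closure [set a + b | a in A & b in B].
Fixpoint msum_n (f : nat -> set X) (n : nat) : set X :=
  match n with 0%N => [set 0] | m.+1 => msum (msum_n f m) (f m) end.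

Definition oppM {T : Type} (N : set T -> set X) : set T -> set X :=
  fun E => [set - x | x in N E].
End Banach.

Section Meas.
Context {d : measure_display} {T : measurableType d}.

Definition dH_multimeasure {X : normedModType R} (M : set T -> set X) : Prop :=
  (forall E, measurable E -> cbX (M E)) /\
  (forall F : nat -> set T, (forall n, measurable (F n)) -> trivIset setT F ->
     forall e : R, 0 < e ->
       \forall n \near \oo, (dH (msum_n (fun k => M (F k)) n) (M (\bigcup_k F k)) <= e%:E)%E).

Definition vector_measure {X : normedModType R} (k : set T -> X) : Prop :=
  forall F : nat -> set T, (forall n, measurable (F n)) -> trivIset setT F ->
    (fun n => \sum_(i < n) k (F i)) @ \oo --> k (\bigcup_i F i).

Definition vector_on {X : normedModType R} (M : set T -> set X) (E : set T) : Prop :=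
  exists k : set T -> X, vector_measure k /\
    forall F, measurable F -> F `<=` E -> M F = [set k F].

Definition pointless {X : normedModType R} (M : set T -> set X) (H : set T) : Prop :=
  ~ exists E, [/\ measurable E, E `<=` H, M E <> [set 0] & vector_on M E].

Definition consistent {X : normedModType R} (M N : set T -> set X) : Prop :=
  exists H, [/\ measurable H, pointless M H, pointless N H,
               vector_on M (~` H) & vector_on N (~` H)].

Definition scalar_int (nu : set T -> R) (f : T -> R) (E : set T) (r : R) : Prop :=
  exists mu1 mu2 : {finite_measure set T -> \bar R},
    [/\ forall A, measurable A -> nu A = fine (mu1 A) - fine (mu2 A),
        mu1.-integrable E (EFin \o f), mu2.-integrable E (EFin \o f) &
        r = fine (\int[mu1]_(x in E) (f x)%:E) - fine (\int[mu2]_(x in E) (f x)%:E)].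

(* Radstrom embedding j(A) = s(.,A) restricted to B_{X'} *)
Definition radstrom {X : normedModType R} (A : set X) : (X -> R) -> R :=
  fun x' => fine (supp x' A).

(* elements of the dual of l_infty(B_{X'}): functionals on (X -> R) -> R,
   linear and bounded with respect to the sup norm over B_{X'} on the
   bounded functions *)
Definition linfty_bounded {X : normedModType R} (g : (X -> R) -> R) : Prop :=
  exists C : R, forall x', dual_ball x' -> `|g x'| <= C.
Definition linfty_dual {X : normedModType R} (phi : ((X -> R) -> R) -> R) : Prop :=
  (forall (a : R) g h, linfty_bounded g -> linfty_bounded h ->
      phi (fun x' => a * g x' + h x') = a * phi g + phi h) /\
  exists C : R, forall g (c : R), linfty_bounded g ->
      (forall x', dual_ball x' -> `|g x'| <= c) -> `|phi g| <= C * c.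

Definition BDS_integral_is {X : normedModType R}
  (n : set T -> ((X -> R) -> R)) (f : T -> R) (E : set T) (y : (X -> R) -> R) : Prop :=
  forall phi, linfty_dual phi -> scalar_int (fun A => phi (n A)) f E (phi y).

Definition BDSm_integral {X : normedModType R} (N : set T -> set X)
  (f : T -> R) (Mf : set T -> set X) : Prop :=
  measurable_fun setT f /\
  forall E, measurable E ->
    [/\ Mf E !=set0, closed (Mf E), convex_set_ (Mf E) &
     forall x', is_dual x' -> exists r1 r2,
       [/\ scalar_int (fun A => fine (supp x' (N A))) (fun t => Num.max (f t) 0) E r1,
           scalar_int (fun A => fine (supp x' (oppM N A))) (fun t => Num.max (- f t) 0) E r2 &
           supp x' (Mf E) = (r1 + r2)%:E]].

Definition BDSm_integrable {X : normedModType R} (N : set T -> set X) (f : T -> R) :=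
  exists Mf, BDSm_integral N f Mf.
End Meas.
End Defs.

From HB Require Import structures.
From mathcomp Require Import all_boot all_order all_algebra.
From mathcomp Require Import all_classical all_reals all_analysis.
From mathcomp Require Import measurable_realfun.
From mathcomp Require Import ring lra.
Import Order.TTheory GRing.Theory Num.Theory.
Import numFieldNormedType.Exports.
Local Open Scope classical_set_scope.
Local Open Scope ring_scope.
Set Implicit Arguments. Unset Strict Implicit. Unset Printing Implicit Defensive.

(* Testing the (BDS) identity in l_infty(B_X') against the functional
   g |-> l * g(x'/l), where l bounds x' in X', gives the scalar identities
   s(x', M(E)) = int_E theta d s(x', N(.)) for every x' (BDS_support).
   Since theta >= 0 we have theta^+ = theta and theta^- = 0, so M itself
   satisfies the defining identity of the BDS_m-integral
   (BDSm_integral_nonneg).  Any BDS_m-integral Mf has the same support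
   functions as M, because scalar integrals of nonnegative functions do not
   depend on the decomposition of the signed measure (scalar_int_uniq), and
   closed convex sets are determined by their support functions (supp_incl),
   which is the Hahn-Banach separation theorem (BDSm_integral_nonneg_unique). *)

Section HahnBanach.
Variables (R : realType) (V : lmodType R) (p : V -> R).
Hypothesis pD : forall x y, p (x + y) <= p x + p y.
Hypothesis pZ : forall (t : R) x, 0 < t -> p (t *: x) = t * p x.

Definition lin_subspace (S : set V) := S 0 /\ forall (a : R) x y, S x -> S y -> S (a *: x + y).
Definition linear_on (S : set V) (g : V -> R) :=
  forall (a : R) x y, S x -> S y -> g (a *: x + y) = a * g x + g y.
Definition dominated (S : set V) (g : V -> R) := forall x, S x -> g x <= p x.

Lemma lin_subspaceZ S a x : lin_subspace S -> S x -> S (a *: x).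
Proof. by move=> [S0 SS] Sx; rewrite -[_ *: _]addr0; apply: SS. Qed.
Lemma lin_subspaceD S x y : lin_subspace S -> S x -> S y -> S (x + y).
Proof. by move=> [S0 SS] Sx Sy; rewrite -[x]scale1r; apply: SS. Qed.
Lemma lin_subspaceB S x y : lin_subspace S -> S x -> S y -> S (x - y).
Proof. by move=> hS Sx Sy; apply: lin_subspaceD => //; rewrite -scaleN1r; apply: lin_subspaceZ. Qed.

Lemma linear_on0 S g : lin_subspace S -> linear_on S g -> g 0 = 0.
Proof.
by move=> [S0 _] hg; have := hg 1 0 0 S0 S0; rewrite scaler0 addr0 mul1r; lra.
Qed.
Lemma linear_onZ S g a x : lin_subspace S -> linear_on S g -> S x -> g (a *: x) = a * g x.
Proof.
move=> hS hg Sx; have := hg a x 0 Sx (proj1 hS); rewrite addr0 => ->.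
by rewrite (linear_on0 hS hg) addr0.
Qed.
Lemma linear_onD S g x y : lin_subspace S -> linear_on S g -> S x -> S y -> g (x + y) = g x + g y.
Proof. by move=> hS hg Sx Sy; have := hg 1 x y Sx Sy; rewrite scale1r mul1r. Qed.

Lemma sublinear0 : p 0 = 0.
Proof. by have := pZ 0 (ltr0n R 2); rewrite scaler0; lra. Qed.

Section OneStep.
Variables (S : set V) (g : V -> R) (z : V).
Hypotheses (hS : lin_subspace S) (hg : linear_on S g) (nSz : ~ S z).

Definition ext_sp := [set w | exists t : R, S (w - t *: z)].
Definition ext_fn (c : R) (w : V) : R :=
  match pselect (exists t : R, S (w - t *: z)) with
  | left H => let t := sval (cid H) in g (w - t *: z) + t * c
  | right _ => 0 end.

(* the decomposition w = x + t z with x in S is unique since z is not in S *)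
Lemma ext_coord_uniq x t t' : S x -> S (x + t *: z - t' *: z) -> t' = t.
Proof.
move=> Sx Sxt; have [//|ntt] := eqVneq t' t; exfalso; apply: nSz.
have : S ((t - t') *: z).
  have -> : (t - t') *: z = x + t *: z - t' *: z - x.
    by rewrite scalerBl [x + _]addrC addrAC addrK.
  exact: lin_subspaceB.
move=> /(lin_subspaceZ (t - t')^-1 hS); rewrite scalerA mulVf ?scale1r //.
by rewrite subr_eq0 eq_sym.
Qed.

Lemma ext_fnE c x t : S x -> ext_fn c (x + t *: z) = g x + t * c.
Proof.
move=> Sx; rewrite /ext_fn; case: pselect => [H|]; last first.
  by case; exists t; rewrite addrK.
case: (cid H) => t' /= St'.
by have -> := ext_coord_uniq Sx St'; rewrite addrK.
Qed.

Lemma ext_spP w : ext_sp w -> exists x t, S x /\ w = x + t *: z.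
Proof. by case=> t St; exists (w - t *: z), t; split => //; rewrite subrK. Qed.

Lemma ext_spE x t : S x -> ext_sp (x + t *: z).
Proof. by move=> Sx; exists t; rewrite addrK. Qed.

Lemma lin_comb (a t1 t2 : R) (x1 x2 : V) :
  a *: (x1 + t1 *: z) + (x2 + t2 *: z) = (a *: x1 + x2) + (a * t1 + t2) *: z.
Proof. by rewrite scalerDr scalerA addrACA scalerDl. Qed.

Lemma ext_subspace : lin_subspace ext_sp.
Proof.
split; first by exists 0; rewrite scale0r subr0; exact: (proj1 hS).
move=> a w1 w2 /ext_spP[x1 [t1 [Sx1 ->]]] /ext_spP[x2 [t2 [Sx2 ->]]].
by rewrite lin_comb; apply: ext_spE; exact: (proj2 hS).
Qed.

Lemma ext_linear_on c : linear_on ext_sp (ext_fn c).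
Proof.
move=> a w1 w2 /ext_spP[x1 [t1 [Sx1 ->]]] /ext_spP[x2 [t2 [Sx2 ->]]].
rewrite lin_comb !ext_fnE //; last exact: (proj2 hS).
by rewrite hg //; ring.
Qed.

Lemma ext_extends c x : S x -> ext_sp x /\ ext_fn c x = g x.
Proof.
move=> Sx; have e : x = x + 0 *: z by rewrite scale0r addr0.
split; first by rewrite e; exact: ext_spE.
by rewrite e ext_fnE // mul0r addr0 scale0r addr0.
Qed.

Lemma ext_at_z c : ext_sp z /\ ext_fn c z = c.
Proof.
have e : z = 0 + 1 *: z by rewrite scale1r add0r.
have S0 := proj1 hS.
by split; [rewrite e; exact: ext_spE|rewrite e ext_fnE ?(linear_on0 hS hg) ?mul1r ?add0r].
Qed.

(* the extension stays below p as soon as c lies between the two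
   one-sided bounds coming from the positive and negative multiples of z *)
Lemma ext_dominated c : dominated S g ->
  (forall x, S x -> g x - p (x - z) <= c) -> (forall y, S y -> c <= p (y + z) - g y) ->
  dominated ext_sp (ext_fn c).
Proof.
move=> gp cl cu w /ext_spP[x [t [Sx ->]]]; rewrite ext_fnE //.
case: (ltgtP 0 t) => [t0|t0|<-].
- have := cu _ (lin_subspaceZ t^-1 hS Sx); rewrite (linear_onZ _ hS hg Sx) => h.
  have -> : x + t *: z = t *: (t^-1 *: x + z).
    by rewrite scalerDr scalerA mulfV ?gt_eqF // scale1r.
  rewrite pZ //.
  have : t * c <= t * (p (t^-1 *: x + z) - t^-1 * g x) by rewrite ler_pM2l.
  by rewrite mulrBr mulrA mulfV ?gt_eqF // mul1r; lra.
- have s0 : 0 < - t by rewrite oppr_gt0.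
  have := cl _ (lin_subspaceZ (- t)^-1 hS Sx); rewrite (linear_onZ _ hS hg Sx) => h.
  have -> : x + t *: z = (- t) *: ((- t)^-1 *: x - z).
    by rewrite scalerBr scalerA mulfV ?gt_eqF // scale1r scaleNr opprK.
  rewrite pZ //.
  have : - t * ((- t)^-1 * g x - p ((- t)^-1 *: x - z)) <= - t * c by rewrite ler_pM2l.
  by rewrite mulrBr mulrA mulfV ?gt_eqF // mul1r; lra.
- by rewrite scale0r addr0 mul0r addr0; exact: gp.
Qed.

(* a dominated functional on S extends, dominated, to S + Rz:
   the admissible values of c form a nonempty interval, take its left end *)
Lemma one_step_extension : dominated S g ->
  exists c, [/\ linear_on ext_sp (ext_fn c), dominated ext_sp (ext_fn c),
                (forall x, S x -> ext_sp x /\ ext_fn c x = g x) & ext_sp z].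
Proof.
move=> gp; pose E := [set g x - p (x - z) | x in S].
have Eub y : S y -> ubound E (p (y + z) - g y).
  move=> Sy _ [x Sx <-]; have := pD (x - z) (y + z).
  rewrite addrACA addNr addr0 => h.
  have := gp _ (lin_subspaceD hS Sx Sy); rewrite (linear_onD hS hg Sx Sy); lra.
have S0 := proj1 hS.
have En : E !=set0 by exists (g 0 - p (0 - z)), 0.
exists (sup E); split; [exact: ext_linear_on| |exact: ext_extends|by case: (ext_at_z (sup E))].
apply: ext_dominated => // [x Sx|y Sy]; last by apply: ge_sup => //; exact: Eub.
by apply: ub_le_sup; [exists (p (0 + z) - g 0); exact: Eub|exists x].
Qed.
End OneStep.

Section MaximalExtension.
Variables (S0 : set V) (g0 : V -> R).
Hypotheses (hS0 : lin_subspace S0) (hg0 : linear_on S0 g0) (gp0 : dominated S0 g0).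

Definition extends (q1 q2 : set V * (V -> R)) :=
  q1.1 `<=` q2.1 /\ forall x, q1.1 x -> q1.2 x = q2.2 x.
Definition good (q : set V * (V -> R)) :=
  [/\ lin_subspace q.1, linear_on q.1 q.2, dominated q.1 q.2 & extends (S0, g0) q].

Lemma extends_refl q : extends q q.
Proof. by split. Qed.

Lemma extends_trans a b c : extends a b -> extends b c -> extends a c.
Proof.
move=> [ab gab] [bc gbc]; split; first exact: subset_trans bc.
by move=> x ax; rewrite gab // gbc //; exact: ab.
Qed.

Section Chain.
Variable A : set (set V * (V -> R)).
Hypotheses (Agood : forall q, A q -> good q) (Ane : A !=set0)
  (Atot : forall q1 q2, A q1 -> A q2 -> extends q1 q2 \/ extends q2 q1).

Definition chain_dom := [set x | exists q, A q /\ q.1 x].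
Definition chain_fn (x : V) : R :=
  match pselect (chain_dom x) with left H => (sval (cid H)).2 x | right _ => 0 end.

Lemma chain_fnE q x : A q -> q.1 x -> chain_fn x = q.2 x.
Proof.
move=> Aq qx; rewrite /chain_fn; case: pselect => [H|[]]; last by exists q.
case: (cid H) => q' [Aq' q'x] /=.
by have [[_ h]|[_ h]] := Atot Aq' Aq; [exact: h|rewrite h].
Qed.

Lemma chain_common x y : chain_dom x -> chain_dom y ->
  exists q, [/\ A q, q.1 x & q.1 y].
Proof.
move=> [q1 [A1 x1]] [q2 [A2 y2]]; have [[h _]|[h _]] := Atot A1 A2.
  by exists q2; split => //; exact: h.
by exists q1; split => //; exact: h.
Qed.

Lemma chain_upper q : A q -> extends q (chain_dom, chain_fn).
Proof.
by move=> Aq; split => [x qx|x qx]; [exists q|rewrite /= (chain_fnE Aq)].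
Qed.

Lemma chain_good : good (chain_dom, chain_fn).
Proof.
have [q1 A1] := Ane; have [_ _ _ [sub01 eq01]] := Agood A1.
split => /=.
- split; first by exists q1; split => //; apply: sub01; exact: (proj1 hS0).
  move=> a x y /chain_common /[apply] -[q [Aq qx qy]].
  have [[_ hS] _ _ _] := Agood Aq; exists q; split => //; exact: hS.
- move=> a x y /chain_common /[apply] -[q [Aq qx qy]].
  have [hS hg _ _] := Agood Aq.
  rewrite !(chain_fnE Aq) //; [exact: hg|exact: (proj2 hS)].
- by move=> x [q [Aq qx]]; rewrite (chain_fnE Aq) //; have [_ _ gp _] := Agood Aq; exact: gp.
- exact: extends_trans (chain_upper A1).
Qed.
End Chain.

Definition good_pair := {q : set V * (V -> R) | good q}.
Definition extendsb (a b : good_pair) : bool := `[< extends (sval a) (sval b) >].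

Lemma good_base : good (S0, g0).
Proof. by split => //; exact: extends_refl. Qed.

(* chains of good pairs have upper bounds: adjoin (S0, g0) to make the chain
   nonempty and take its union *)
Lemma good_chain_ub (A : set good_pair) : total_on A extendsb ->
  exists t, forall s, A s -> extendsb s t.
Proof.
move=> Atot; pose A' := [set sval q | q in A] `|` [set (S0, g0)].
have hA' q : A' q -> good q by case=> [[q' _ <-]|->]; [exact: svalP|exact: good_base].
have A'ne : A' !=set0 by exists (S0, g0); right.
have A'tot q1 q2 : A' q1 -> A' q2 -> extends q1 q2 \/ extends q2 q1.
  move=> [[a Aa <-]|->] [[b Ab <-]|->].
  - by have [/asboolP|/asboolP] := Atot _ _ Aa Ab; [left|right].
  - by right; have [_ _ _] := svalP a.
  - by left; have [_ _ _] := svalP b.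
  - by left; exact: extends_refl.
exists (exist _ _ (chain_good hA' A'ne A'tot)) => s As; apply/asboolP.
by apply: chain_upper => //; left; exists s.
Qed.

(* Hahn-Banach: a dominated linear functional on a subspace extends to a
   dominated linear functional on the whole space; a maximal good pair is
   defined everywhere, otherwise one_step_extension would enlarge it *)
Theorem hahn_banach : exists F : V -> R,
  [/\ linear_on setT F, dominated setT F & forall x, S0 x -> F x = g0 x].
Proof.
have [] := @ZL_preorder good_pair (exist _ _ good_base) extendsb.
- by move=> t; apply/asboolP; exact: extends_refl.
- by move=> a b c /asboolP h1 /asboolP h2; apply/asboolP; exact: extends_trans h2.
- exact: good_chain_ub.
move=> [[S g] [hS hg gp [sub0 eq0]]] /= gmax.
have ST : forall w, S w.
  move=> w; apply: contrapT => nSw.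
  have [c [lc dc ec Sw]] := one_step_extension hS hg nSw gp.
  have le : extends (S, g) (ext_sp S w, ext_fn S g w c).
    by split=> x /ec [] // _ ->.
  have gc : good (ext_sp S w, ext_fn S g w c).
    by split => //; [exact: ext_subspace|exact: (extends_trans (conj sub0 eq0) le)].
  have /asboolP [/= sub _] := gmax (exist _ _ gc) (asboolT le).
  exact: nSw (sub _ Sw).
clear gmax; exists g; split => [a x y _ _|x _|x /eq0 //]; [exact: hg|exact: gp].
Qed.
End MaximalExtension.

Corollary sublinear_support (z : V) : z != 0 ->
  exists F : V -> R, [/\ linear_on setT F, dominated setT F & F z = p z].
Proof.
move=> z0; have nz : ~ [set 0] z by move=> /= /eqP; rewrite (negbTE z0).
have hS0 : lin_subspace [set 0] by split => // a x y -> ->; rewrite scaler0 addr0.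
have hg0 : linear_on [set 0] (fun _ => 0) by move=> a x y _ _; rewrite mulr0 addr0.
have dom0 : dominated (ext_sp [set 0] z) (ext_fn [set 0] (fun _ => 0) z (p z)).
  apply: ext_dominated => //.
  - by move=> x ->; rewrite sublinear0.
  - by move=> x -> /=; rewrite !add0r; have := pD z (- z); rewrite subrr sublinear0; lra.
  - by move=> y -> /=; rewrite add0r subr0.
have [F [lF dF eF]] := hahn_banach (ext_subspace z hS0) (ext_linear_on hS0 hg0 nz (p z)) dom0.
exists F; split => //; have [zS <-] := ext_at_z hS0 hg0 nz (p z); exact: eF.
Qed.
End HahnBanach.

Section Separation.
Variables (R : realType) (X : normedModType R).

Lemma closed_far (B : set X) a : closed B -> ~ B a ->
  exists2 e : R, 0 < e & forall b, B b -> e <= `|b - a|.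
Proof.
move=> cB nBa.
have /nbhs_ballP[e e0 eB] : nbhs a (~` B).
  by apply: open_nbhs_nbhs; split => //; exact: closed_openC.
exists e => // b Bb; rewrite leNgt; apply/negP => lt; apply: (eB b) Bb.
by rewrite -ball_normE /ball_ /= distrC.
Qed.

Definition cone_dist (C : set X) (x : X) := inf [set `|x - c| | c in C].

Section ConeDist.
Variable C : set X.
Hypotheses (C0 : C 0) (CD : forall c1 c2, C c1 -> C c2 -> C (c1 + c2))
  (CZ : forall t c, 0 <= t -> C c -> C (t *: c)).

Lemma cone_dist_ne x : [set `|x - c| | c in C] !=set0.
Proof. by exists `|x - 0|, 0. Qed.

Lemma cone_dist_le x c : C c -> cone_dist C x <= `|x - c|.
Proof. by move=> Cc; apply: ge_inf; [exists 0 => _ [? _ <-]|exists c]. Qed.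

Lemma cone_distD x y : cone_dist C (x + y) <= cone_dist C x + cone_dist C y.
Proof.
have step c1 : C c1 -> cone_dist C (x + y) - `|x - c1| <= cone_dist C y.
  move=> Cc1; apply: lb_le_inf; first exact: cone_dist_ne.
  move=> _ [c2 Cc2 <-]; have := cone_dist_le (x + y) (CD Cc1 Cc2).
  rewrite opprD addrACA => h; have := ler_normD (x - c1) (y - c2); lra.
have : cone_dist C (x + y) - cone_dist C y <= cone_dist C x.
  apply: lb_le_inf; first exact: cone_dist_ne.
  by move=> _ [c1 Cc1 <-]; have := step c1 Cc1; lra.
lra.
Qed.

Lemma cone_distZle t x : 0 < t -> cone_dist C (t *: x) <= t * cone_dist C x.
Proof.
move=> t0; rewrite mulrC -ler_pdivrMr //.
apply: lb_le_inf; first exact: cone_dist_ne.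
move=> _ [c Cc <-]; rewrite ler_pdivrMr //.
have := cone_dist_le (t *: x) (CZ (ltW t0) Cc).
by rewrite -scalerBr normrZ gtr0_norm // mulrC.
Qed.

Lemma cone_distZ t x : 0 < t -> cone_dist C (t *: x) = t * cone_dist C x.
Proof.
move=> t0; apply/eqP; rewrite eq_le cone_distZle //=.
have := @cone_distZle t^-1 (t *: x); rewrite invr_gt0 => /(_ t0).
rewrite scalerA mulVf ?gt_eqF // scale1r => h.
by rewrite -ler_pdivlMl // mulrC.
Qed.
End ConeDist.

Definition cone (D : set X) := [set c | exists l w, [/\ 0 <= l, D w & c = l *: w]].

Section ConvexCone.
Variables (D : set X) (w0 : X).
Hypotheses (Dconv : convex_set_ D) (Dw0 : D w0).

Lemma cone0 : cone D 0.
Proof. by exists 0, w0; rewrite scale0r. Qed.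

Lemma coneZ t c : 0 <= t -> cone D c -> cone D (t *: c).
Proof.
move=> t0 [l [w [l0 Dw ->]]]; exists (t * l), w.
by rewrite scalerA mulr_ge0.
Qed.

Lemma coneD c1 c2 : cone D c1 -> cone D c2 -> cone D (c1 + c2).
Proof.
move=> [l1 [w1 [l10 Dw1 ->]]] [l2 [w2 [l20 Dw2 ->]]].
have [L0|Lp] := eqVneq (l1 + l2) 0.
  have [-> ->] : l1 = 0 /\ l2 = 0 by split; lra.
  by rewrite !scale0r addr0; exact: cone0.
have Lgt : 0 < l1 + l2 by rewrite lt_neqAle eq_sym Lp addr_ge0.
exists (l1 + l2), ((l1 / (l1 + l2)) *: w1 + (1 - l1 / (l1 + l2)) *: w2); split.
- exact: addr_ge0.
- apply: Dconv => //; apply/andP; split; first by rewrite divr_ge0 // ltW.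
  by rewrite ler_pdivrMr // mul1r lerDl.
- have -> : 1 - l1 / (l1 + l2) = l2 / (l1 + l2) by field.
  by rewrite scalerDr !scalerA !mulrA !(mulrC (l1 + l2)) -!mulrA divff // !mulr1.
Qed.

(* if D stays at norm >= r from the origin and -z lies in D, then z is at
   distance >= r from the cone of D: for c = l w, (z - c) / (1 + l) is minus
   a convex combination of -z and w, hence has norm >= r *)
Lemma cone_dist_lower r z : 0 <= r -> (forall w, D w -> r <= `|w|) -> D (- z) ->
  r <= cone_dist (cone D) z.
Proof.
move=> r0 Dr Dz; apply: lb_le_inf; first exact: (cone_dist_ne cone0).
move=> _ [c [l [w [l0 Dw ->]]] <-].
have l1 : 0 < 1 + l by lra.
have Ds : D ((1 + l)^-1 *: (- z) + (1 - (1 + l)^-1) *: w).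
  apply: Dconv => //; apply/andP; split; first by rewrite invr_ge0 ltW.
  by rewrite invf_le1 // lerDl.
have := Dr _ Ds.
have -> : (1 + l)^-1 *: (- z) + (1 - (1 + l)^-1) *: w = - ((1 + l)^-1 *: (z - l *: w)).
  rewrite scalerBr opprB scalerN addrC scalerA; congr (_ + _).
  by congr (_ *: _); field; rewrite gt_eqF.
rewrite normrN normrZ gtr0_norm ?invr_gt0 // mulrC ler_pdivlMr // => h.
have rl : 0 <= r * l by exact: mulr_ge0.
nra.
Qed.
End ConvexCone.

Lemma linear_onT_sub (F : X -> R) x y : linear_on setT F -> F (x - y) = F x - F y.
Proof.
have hT : lin_subspace [set: X] by [].
by move=> hF; rewrite (linear_onD hT hF) // -scaleN1r (linear_onZ _ hT hF) // mulN1r.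
Qed.

(* a linear functional dominated by the distance to a set containing 0 is
   1-Lipschitz, hence continuous *)
Lemma dominated_dual (C : set X) (F : X -> R) : C 0 -> linear_on setT F ->
  dominated (cone_dist C) setT F -> is_dual F.
Proof.
move=> C0 hF Fp.
have Fb x : `|F x| <= `|x|.
  have := Fp x I; have := Fp (0 - x) I; rewrite linear_onT_sub // (linear_on0 _ hF) //.
  have := cone_dist_le x C0; have := cone_dist_le (0 - x) C0.
  by rewrite !subr0 sub0r normrN ler_norml; lra.
split; first by move=> a u v; exact: hF.
move=> x; apply/cvgrPdist_le => /= eps eps0.
apply/nbhs_ballP; exists eps => // y; rewrite -ball_normE /ball_ /= => h.
by rewrite -linear_onT_sub //; apply: (le_trans (Fb _)); exact: ltW.
Qed.

Definition fattened (B : set X) (a : X) (r : R) :=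
  [set w | exists b u, [/\ B b, `|u| <= r & w = b - a + u]].

Lemma fattened_convex (B : set X) a r : convex_set_ B -> convex_set_ (fattened B a r).
Proof.
move=> convB w1 w2 t [b1 [u1 [Bb1 u1r ->]]] [b2 [u2 [Bb2 u2r ->]]] /[dup] t01 /andP[t0 t1].
exists (t *: b1 + (1 - t) *: b2), (t *: u1 + (1 - t) *: u2); split.
- exact: convB.
- apply: (le_trans (ler_normD _ _)).
  rewrite !normrZ (ger0_norm t0) ger0_norm ?subr_ge0 //.
  have : t * `|u1| <= t * r by rewrite ler_wpM2l.
  have : (1 - t) * `|u2| <= (1 - t) * r by rewrite ler_wpM2l // subr_ge0.
  lra.
- rewrite scalerDr [(1 - t) *: (_ + u2)]scalerDr addrACA; congr (_ + _).
  by rewrite !scalerBr addrACA -opprD -scalerDl subrKC scale1r.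
Qed.

Lemma fattened_far (B : set X) a e : (forall b, B b -> e <= `|b - a|) ->
  forall w, fattened B a (e / 2) w -> e / 2 <= `|w|.
Proof.
move=> eB w [b [u [Bb ur ->]]]; have := lerB_dist (b - a) (- u).
by rewrite opprK normrN => h; have := eB b Bb; lra.
Qed.

(* Hahn-Banach separation of a point from a closed convex set: take F
   linear, dominated by the distance p to the cone C generated by the
   fattened set D = (B - a) + (e/2)ball, with F z = p z > 0 at z = a - b0.
   For b in B and u = (e/2) z / |z|, b - a + u lies in C, so
   F (b - a + u) <= p (b - a + u) = 0, i.e. F b <= F a - F u. *)
Lemma separation (B : set X) a : closed B -> convex_set_ B -> B !=set0 -> ~ B a ->
  exists x' : X -> R, is_dual x' /\
    exists2 del : R, 0 < del & forall b, B b -> x' b <= x' a - del.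
Proof.
move=> cB convB [b0 Bb0] nBa; have [e e0 eB] := closed_far cB nBa.
pose r := e / 2; pose D := fattened B a r; pose C := cone D; pose p := cone_dist C.
have r0 : 0 < r by rewrite divr_gt0.
have Db0 : D (b0 - a) by exists b0, 0; rewrite normr0 addr0 ltW.
have Dconv : convex_set_ D := fattened_convex convB.
have C0 : C 0 := cone0 Db0.
pose z := a - b0.
have z0 : z != 0 by rewrite subr_eq0; apply: contraPneq nBa => ->.
have pD x y : p (x + y) <= p x + p y.
  by apply: cone_distD => // c1 c2; exact: (coneD Dconv Db0).
have pZ t x : 0 < t -> p (t *: x) = t * p x by apply: cone_distZ => // t' c; exact: coneZ.
have [F [Flin Fp Fz]] := sublinear_support pD pZ z0.
have dF := dominated_dual C0 Flin Fp.
have pzr : r <= p z.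
  by apply: (cone_dist_lower Dconv Db0) (ltW r0) (fattened_far eB) _; rewrite opprB.
have nz0 : 0 < `|z| by rewrite normr_gt0.
exists F; split => //; exists (r / `|z| * p z); first by rewrite !mulr_gt0 ?invr_gt0; lra.
move=> b Bb; pose u := (r / `|z|) *: z.
have ur : `|u| = r by rewrite normrZ ger0_norm ?divr_ge0 ?ltW // -mulrA mulVf ?gt_eqF ?mulr1.
have Cbu : C (b - a + u) by exists 1, (b - a + u); rewrite scale1r; split => //; exists b, u; rewrite ur.
have := Fp (b - a + u) I; have := cone_dist_le (b - a + u) Cbu; rewrite subrr normr0.
have hT : lin_subspace [set: X] by [].
rewrite (linear_onD hT Flin) // linear_onT_sub // (linear_onZ _ hT Flin) // Fz.
rewrite /p; lra.
Qed.

Lemma supp_incl (A B : set X) : closed B -> convex_set_ B -> B !=set0 ->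
  (forall x', is_dual x' -> supp x' A = supp x' B) -> A `<=` B.
Proof.
move=> cB convB nB eqs a Aa; apply: contrapT => nBa.
have [F [dF [del del0 hb]]] := separation cB convB nB nBa.
have h1 : (supp F B <= (F a - del)%:E)%E.
  by apply: ge_ereal_sup => _ [b Bb <-]; rewrite lee_fin; exact: hb.
have h2 : ((F a)%:E <= supp F A)%E by apply: ereal_sup_ubound; exists a.
by rewrite eqs // in h2; have := le_trans h2 h1; rewrite lee_fin; lra.
Qed.
End Separation.

Section Dual.
Variables (R : realType) (X : normedModType R).

Lemma dual0 (x' : X -> R) : is_dual x' -> x' 0 = 0.
Proof. by move=> [lin _]; have := lin 1 0 0; rewrite scaler0 addr0 mul1r; lra. Qed.

Lemma dualZ (x' : X -> R) k u : is_dual x' -> x' (k *: u) = k * x' u.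
Proof. by move=> dx; have [lin _] := dx; rewrite -[k *: u]addr0 lin dual0 // addr0. Qed.

Lemma dualN (x' : X -> R) : is_dual x' -> is_dual (fun u => - x' u).
Proof.
move=> [lin cx]; split; first by move=> a u v; rewrite lin; ring.
by move=> u; apply: cvgN; exact: cx.
Qed.

Lemma dual_bound (x' : X -> R) : is_dual x' ->
  exists2 l : R, 0 < l & forall u, `|x' u| <= l * `|u|.
Proof.
move=> dx; have [_ cx] := dx.
have := cx 0; move/cvgrPdist_lt => /(_ 1 ltr01) /nbhs_ballP[del del0 hdel].
exists (2 / del); first by rewrite divr_gt0.
move=> u; have [->|u0] := eqVneq u 0; first by rewrite dual0 // !normr0 mulr0.
have nu : 0 < `|u| by rewrite normr_gt0.
pose k := del / (2 * `|u|).
have k0 : 0 < k by rewrite divr_gt0 // mulr_gt0.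
have : ball (0 : X) del (k *: u).
  rewrite -ball_normE /ball_ /= sub0r normrN normrZ gtr0_norm //.
  have -> : k * `|u| = del / 2 by rewrite /k; field; rewrite gt_eqF.
  by rewrite ltr_pdivrMr // ltr_pMr // ltr1n.
move=> /hdel /=; rewrite dual0 // sub0r normrN dualZ // normrM gtr0_norm // => h.
have : `|x' u| < k^-1 by rewrite -(ltr_pM2l k0) mulfV ?gt_eqF.
have -> : k^-1 = 2 / del * `|u| by rewrite /k; field; rewrite !gt_eqF.
exact: ltW.
Qed.

Lemma supp_scale (x' : X -> R) (C : set X) k : 0 < k ->
  supp (fun u => k * x' u) C = (k%:E * supp x' C)%E.
Proof.
move=> k0; rewrite /supp -ereal_sup_pZl //; congr ereal_sup.
apply/seteqP; split => [_ [x Cx <-]|_ [_ [x Cx <-] <-]].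
  by exists (x' x)%:E; [exists x|].
by exists x.
Qed.

Lemma supp_opp (x' : X -> R) (C : set X) : is_dual x' ->
  supp x' [set - x | x in C] = supp (fun u => - x' u) C.
Proof.
move=> dx; rewrite /supp; congr ereal_sup.
have xN y : x' (- y) = - x' y by rewrite -scaleN1r dualZ // mulN1r.
apply/seteqP; split => [_ [_ [y Cy <-] <-]|_ [y Cy <-]].
  by exists y => //; rewrite xN.
by exists (- y); [exists y|rewrite xN].
Qed.

Lemma supp_fin (x' : X -> R) (C : set X) : is_dual x' -> C !=set0 -> bounded_set C ->
  supp x' C \is a fin_num.
Proof.
move=> dx [c Cc] bC; have [l l0 hl] := dual_bound dx.
have [Mb Mb0 hM] := pinfty_ex_gt0 bC.
apply/fin_numPlt/andP; split.
  by apply: (@lt_le_trans _ _ (x' c)%:E); [exact: ltNyr|apply: ereal_sup_ubound; exists c].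
apply: (@le_lt_trans _ _ (l * Mb)%:E); last exact: ltry.
apply: ge_ereal_sup => _ [x Cx <-]; rewrite lee_fin.
apply: (le_trans (ler_norm _)); apply: (le_trans (hl x)).
by rewrite ler_pM2l //; exact: hM.
Qed.

(* every x' in X' induces, through the Radstrom embedding, a functional on
   l_infty(B_X'): evaluation at x'/l, rescaled by l, where l bounds x' *)
Lemma dual_radstrom (x' : X -> R) : is_dual x' ->
  exists phi, linfty_dual phi /\ forall C : set X, phi (radstrom C) = fine (supp x' C).
Proof.
move=> dx; have [l l0 hl] := dual_bound dx.
pose y' u := l^-1 * x' u.
have y'ball : dual_ball y'.
  split; first by move=> a u v; have [lin _] := dx; rewrite /y' lin; ring.
  move=> u; rewrite /y' normrM ger0_norm; last by rewrite invr_ge0 ltW.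
  by rewrite ler_pdivrMl //; exact: hl.
exists (fun g => l * g y'); split.
  split; first by move=> a g h _ _; ring.
  by exists l => g c _ hg; rewrite normrM gtr0_norm // ler_pM2l //; exact: hg.
move=> C; rewrite /radstrom.
have -> : supp x' C = (l%:E * supp y' C)%E.
  by rewrite /y' supp_scale ?invr_gt0 // muleA -EFinM mulfV ?gt_eqF // mul1e.
case: (supp y' C) => [s| |] /=; first by [].
  by rewrite mulry gtr0_sg // mul1e mulr0.
by rewrite mulrNy gtr0_sg // mul1e mulr0.
Qed.
End Dual.

Section ScalarIntegral.
Variables (R : realType) (d : measure_display) (T : measurableType d).

(* the scalar integral of a nonnegative function does not depend on the
   decomposition nu = mu1 - mu2: compare through mu1 + mu2' = mu1' + mu2 *)
Lemma scalar_int_uniq (nu : set T -> R) (f : T -> R) E r r' :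
  measurable E -> measurable_fun E f -> (forall t, 0 <= f t) ->
  scalar_int nu f E r -> scalar_int nu f E r' -> r = r'.
Proof.
move=> mE mf f0 [m1 [m2 [h1 i1 i2 ->]]] [m1' [m2' [h1' i1' i2' ->]]].
have eqm A : measurable A -> A `<=` E -> measure_add m1 m2' A = measure_add m1' m2 A.
  move=> mA _; rewrite !measure_addE.
  have f1 : (m1 : measure T R) A \is a fin_num := fin_num_measure m1 A mA.
  have f2 : (m2 : measure T R) A \is a fin_num := fin_num_measure m2 A mA.
  have f1' : (m1' : measure T R) A \is a fin_num := fin_num_measure m1' A mA.
  have f2' : (m2' : measure T R) A \is a fin_num := fin_num_measure m2' A mA.
  rewrite -(fineK f1) -(fineK f2) -(fineK f1') -(fineK f2').
  by rewrite -!EFinD; congr EFin; have := h1 A mA; rewrite h1' //; lra.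
have mfE : measurable_fun E (EFin \o f : T -> \bar R) by apply/measurable_EFinP.
have f0E x : E x -> (0 <= (EFin \o f) x)%E by move=> _; rewrite lee_fin.
have := eq_measure_integral (measure_add m1' m2) (f := EFin \o f) eqm.
rewrite !ge0_integral_measure_add //.
rewrite -(fineK (integrable_fin_num mE i1)) -(fineK (integrable_fin_num mE i2)).
rewrite -(fineK (integrable_fin_num mE i1')) -(fineK (integrable_fin_num mE i2')).
rewrite -!EFinD => hEq.
by have := EFin_inj hEq; lra.
Qed.

Lemma scalar_int_zero (nu : set T -> R) (f : T -> R) E r :
  scalar_int nu f E r -> scalar_int nu (fun _ => 0) E 0.
Proof.
move=> [m1 [m2 [hm _ _ _]]]; exists m1, m2; split => //; try exact: integrable0.
by rewrite !integral0_eq //= subrr.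
Qed.

Lemma scalar_int_zero_val (nu : set T -> R) E r :
  scalar_int nu (fun _ => 0) E r -> r = 0.
Proof. by move=> [m1 [m2 [_ _ _ ->]]]; rewrite !integral0_eq //= subrr. Qed.
End ScalarIntegral.

Section BDSm.
Variables (R : realType) (d : measure_display) (T : measurableType d)
  (X : normedModType R).

(* testing the (BDS)-integral in l_infty(B_X') against the functionals of
   dual_radstrom yields the scalar integrals of the support functions *)
Lemma BDS_support (N : set T -> set X) (f : T -> R) E (C : set X) (x' : X -> R) :
  BDS_integral_is (fun A => radstrom (N A)) f E (radstrom C) -> is_dual x' ->
  scalar_int (fun A => fine (supp x' (N A))) f E (fine (supp x' C)).
Proof.
move=> hI dx; have [phi [dphi hphi]] := dual_radstrom dx.
have := hI phi dphi; rewrite hphi.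
by have -> : (fun A => phi (radstrom (N A))) = fun A => fine (supp x' (N A))
  by apply/funext => A; exact: hphi.
Qed.

Section NonnegIntegrand.
Variables (N M : set T -> set X) (f : T -> R).
Hypotheses (mf : measurable_fun setT f) (f0 : forall t, 0 <= f t)
  (Mcb : forall E, measurable E -> cbX (M E))
  (Msupp : forall x' E, is_dual x' -> measurable E ->
     scalar_int (fun A => fine (supp x' (N A))) f E (fine (supp x' (M E)))).

Let f_pos : (fun t => Num.max (f t) 0) = f.
Proof. by apply/funext => t; rewrite max_l. Qed.

Let f_neg : (fun t => Num.max (- f t) 0) = fun _ => 0.
Proof. by apply/funext => t; rewrite max_r // oppr_le0. Qed.

(* for a nonnegative integrand only the part against N contributes, so M
   itself is a BDS_m-integral *)
Lemma BDSm_integral_nonneg : BDSm_integral N f M.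
Proof.
split => // E mE; have [Mne [Mcl [Mbd Mcv]]] := Mcb mE.
split => // x' dx; exists (fine (supp x' (M E))), 0; split.
- by rewrite f_pos; exact: Msupp.
- rewrite f_neg; apply: (scalar_int_zero (f := f) (r := fine (supp (fun u => - x' u) (M E)))).
  have := Msupp (dualN dx) mE.
  by have -> : (fun A => fine (supp (fun u => - x' u) (N A))) = fun A => fine (supp x' (oppM N A))
    by apply/funext => A; rewrite /oppM supp_opp.
- by rewrite addr0 fineK //; exact: supp_fin.
Qed.

(* and it is the only one: all candidates have the support functions of M,
   and closed convex sets are determined by their support functions *)
Lemma BDSm_integral_nonneg_unique Mf : BDSm_integral N f Mf ->
  forall E, measurable E -> M E = Mf E.
Proof.
move=> [_ hMf] E mE; have [Mne [Mcl [Mbd Mcv]]] := Mcb mE.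
have [Fne Fcl Fcv hF] := hMf E mE.
have eqs x' : is_dual x' -> supp x' (Mf E) = supp x' (M E).
  move=> dx; have [r1 [r2 [s1 s2 ->]]] := hF x' dx.
  rewrite f_neg in s2; rewrite f_pos in s1.
  rewrite (scalar_int_zero_val s2) addr0.
  rewrite (scalar_int_uniq mE (measurable_funS _ _ mf) f0 s1 (Msupp dx mE)) //.
  by rewrite fineK //; exact: supp_fin.
by apply/seteqP; split; apply: supp_incl => // x' /eqs.
Qed.
End NonnegIntegrand.
End BDSm.

Theorem corollary5p10 (R : realType) (d : measure_display) (T : measurableType d)
  (X : completeNormedModType R) (M N : set T -> set X) (theta : T -> R) :
  dH_multimeasure M -> dH_multimeasure N -> consistent M N ->
  measurable_fun setT theta -> (forall t, 0 <= theta t) ->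
  (exists C : R, forall t, `|theta t| <= C) ->
  (forall E, measurable E ->
     BDS_integral_is (fun A => radstrom (N A)) theta E (radstrom (M E))) ->
  BDSm_integrable N theta /\
  (forall Mf, BDSm_integral N theta Mf -> forall E, measurable E -> M E = Mf E).
Proof.
move=> [Mcb _] _ _ mth th0 _ hBDS.
have Msupp x' E : is_dual x' -> measurable E ->
    scalar_int (fun A => fine (supp x' (N A))) theta E (fine (supp x' (M E))).
  by move=> dx mE; exact: BDS_support (hBDS E mE) dx.
split; first by exists M; exact: BDSm_integral_nonneg.
exact: BDSm_integral_nonneg_unique.
Qed.
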